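(* Let $S$ and $T$ be finite semigroups without zero and let $h\ge0$ be an integer. Suppose that every language (over any finite alphabet) recognised by a finite Rees zero-matrix semigroup over $S$ has generalised star-height at most $h$, and likewise every language recognised by a finite Rees zero-matrix semigroup over $T$ has generalised star-height at most $h$. Then every language recognised by a finite Rees zero-matrix semigroup over the direct product $S\times T$ has generalised star-height at most $h$.
   Context: For a semigroup $U$ without zero, non-empty sets $I,\Lambda$ and a $\Lambda\times I$ matrix $M=(m_{\lambda i})$ with entries in $U\cup\{\mathbf{0}\}$ ($\mathbf{0}$ a new symbol), the Rees zero-matrix semigroup over $U$, $M^{0}[U;I,\Lambda;M]$, is $(I\times U\times\Lambda)\cup\{\mathbf{0}\}$ with $(i,u,\lambda)(j,v,\mu)=(i,u\,m_{\lambda j}\,v,\mu)$ if $m_{\lambda j}\ne\mathbf{0}$, $=\mathbf{0}$ if $m_{\lambda j}=\mathbf{0}$, and $x\mathbf{0}=\mathbf{0}x=\mathbf{0}$; it is finite when $U$, $I$, $\Lambda$ are finite. A language $L\subseteq A^{+}$ over a finite alphabet $A$ is recognised by a semigroup $V$ if there is a semigroup morphism $\psi:A^{+}\to V$ and a subset $X\subseteq V$ with $L=X\psi^{-1}$. Generalised regular expressions over $A$: $\emptyset$, $\varepsilon$ and each letter are expressions; if $E,F$ are expressions so are $E\cup F$, $EF$, $E^{\ast}$, $E^{c}$ (complement in $A^{\ast}$). Star-height: $h(\emptyset)=h(\varepsilon)=h(a)=0$, $h(E\cup F)=h(EF)=\max\{h(E),h(F)\}$, $h(E^{\ast})=h(E)+1$,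 $h(E^{c})=h(E)$; the star-height of a language is the minimum of $h(E)$ over expressions $E$ representing it. *)

From mathcomp Require Import all_boot.
Set Implicit Arguments. Unset Strict Implicit. Unset Printing Implicit Defensive.

(* A semigroup is a carrier with an associative binary operation
   (associativity is an explicit hypothesis where needed). *)

Definition is_zero (V : Type) (mul : V -> V -> V) (z : V) : Prop :=
  forall x, mul z x = z /\ mul x z = z.

Definition without_zero (V : Type) (mul : V -> V -> V) : Prop :=
  ~ (exists z, is_zero mul z).

Definition prod_mul (S T : Type) (mulS : S -> S -> S) (mulT : T -> T -> T)
  (x y : S * T) : S * T := (mulS x.1 y.1, mulT x.2 y.2).

(* Rees zero-matrix semigroup M^0[U; I, Lam; P]: carrier (I * U * Lam) + {0},
   with 0 represented by None; P : Lam -> I -> U + {0} (None = the new zero). *)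
Definition rees_mul (U I Lam : Type) (mulU : U -> U -> U)
  (P : Lam -> I -> option U) (x y : option (I * U * Lam)) : option (I * U * Lam) :=
  match x, y with
  | Some (i, u, l), Some (j, v, m) =>
      match P l j with
      | Some p => Some (i, mulU (mulU u p) v, m)
      | None => None
      end
  | _, _ => None
  end.

Definition lang (A : Type) := seq A -> Prop.

(* L (a subset of A^+) is recognised by (V, mul): there is a semigroup
   morphism psi : A^+ -> V (the value of psi on the empty word is irrelevant)
   and X a subset of V with L = X psi^{-1}. *)
Definition recognised (A V : Type) (mul : V -> V -> V) (L : lang A) : Prop :=
  exists psi : seq A -> V,
    (forall u v, u <> [::] -> v <> [::] -> psi (u ++ v) = mul (psi u) (psi v)) /\
    exists X : V -> Prop, forall w, L w <-> (w <> [::] /\ X (psi w)).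

Inductive gre (A : Type) : Type :=
| GEmpty : gre A
| GEps : gre A
| GLet : A -> gre A
| GUnion : gre A -> gre A -> gre A
| GConcat : gre A -> gre A -> gre A
| GStar : gre A -> gre A
| GCompl : gre A -> gre A.

Arguments GEmpty {A}.
Arguments GEps {A}.

Fixpoint gre_lang (A : eqType) (E : gre A) : lang A :=
  match E with
  | GEmpty => fun _ => False
  | GEps => fun w => w = [::]
  | GLet a => fun w => w = [:: a]
  | GUnion E F => fun w => gre_lang E w \/ gre_lang F w
  | GConcat E F => fun w => exists u v, w = u ++ v /\ gre_lang E u /\ gre_lang F v
  | GStar E => fun w => exists ws : seq (seq A),
                 w = flatten ws /\ (forall u, u \in ws -> gre_lang E u)
  | GCompl E => fun w => ~ gre_lang E w
  end.

Fixpoint star_height (A : Type) (E : gre A) : nat :=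
  match E with
  | GEmpty | GEps | GLet _ => 0
  | GUnion E F | GConcat E F => maxn (star_height E) (star_height F)
  | GStar E => (star_height E).+1
  | GCompl E => star_height E
  end.

Definition star_height_le (A : eqType) (h : nat) (L : lang A) : Prop :=
  exists E : gre A, star_height E <= h /\ forall w, L w <-> gre_lang E w.

(* Finite Rees zero-matrix semigroups: I, Lam non-empty finite sets. *)
Definition rees_star_height_le (U : Type) (mulU : U -> U -> U) (h : nat) : Prop :=
  forall (I Lam A : finType) (P : Lam -> I -> option U),
    (exists i : I, True) -> (exists l : Lam, True) ->
    forall L : lang A, recognised (rees_mul mulU P) L -> star_height_le h L.

From Stdlib Require Import Classical.
From mathcomp Require Import all_boot.
Set Implicit Arguments. Unset Strict Implicit. Unset Printing Implicit Defensive.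

(* The projections S x T -> S and S x T -> T induce morphisms from a Rees
   zero-matrix semigroup over S x T onto Rees zero-matrix semigroups over S and
   over T (with the projected sandwich matrices), and together they separate
   points.  Hence a language recognised over S x T is the finite union, over
   the accepted elements z, of the intersection of a language recognised over S
   with one recognised over T; finite unions and intersections (via complement)
   do not increase generalised star-height. *)

Section StarHeightClosure.
Variables (A : eqType) (h : nat).

Lemma star_height_le_ext (L L' : lang A) :
  (forall w, L w <-> L' w) -> star_height_le h L -> star_height_le h L'.
Proof.
move=> eqL [E [hE eE]]; exists E; split=> // w.
by split=> [/eqL/eE | /eE/eqL].
Qed.

Lemma star_height_le_empty : star_height_le h (fun _ : seq A => False).
Proof. by exists GEmpty. Qed.

Lemma star_height_le_compl (L : lang A) :
  star_height_le h L -> star_height_le h (fun w => ~ L w).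
Proof.
move=> [E [hE eE]]; exists (GCompl E); split=> // w /=.
by split=> nL K; apply: nL; apply/eE.
Qed.

Lemma star_height_le_union (L1 L2 : lang A) :
  star_height_le h L1 -> star_height_le h L2 ->
  star_height_le h (fun w => L1 w \/ L2 w).
Proof.
move=> [E1 [hE1 eE1]] [E2 [hE2 eE2]]; exists (GUnion E1 E2).
by split=> [|w /=]; [rewrite geq_max hE1 hE2 | rewrite eE1 eE2].
Qed.

Lemma star_height_le_inter (L1 L2 : lang A) :
  star_height_le h L1 -> star_height_le h L2 ->
  star_height_le h (fun w => L1 w /\ L2 w).
Proof.
move=> sh1 sh2.
have sh := star_height_le_compl
  (star_height_le_union (star_height_le_compl sh1) (star_height_le_compl sh2)).
apply: star_height_le_ext sh => w.
by split=> [nU | [l1 l2] [] //]; split; apply: NNPP => K; apply: nU; tauto.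
Qed.

Lemma star_height_le_restrict (P : Prop) (L : lang A) :
  star_height_le h L -> star_height_le h (fun w => P /\ L w).
Proof.
move=> shL; case: (classic P) => [p | np].
  by apply: star_height_le_ext shL => w; tauto.
by apply: star_height_le_ext star_height_le_empty => w; tauto.
Qed.

Lemma star_height_le_bigcup_seq (Z : eqType) (L : Z -> lang A) (s : seq Z) :
  (forall z, star_height_le h (L z)) ->
  star_height_le h (fun w => exists2 z, z \in s & L z w).
Proof.
move=> shL; elim: s => [|z s IH].
  by apply: star_height_le_ext star_height_le_empty => w; split=> // [[]].
apply: star_height_le_ext (star_height_le_union (shL z) IH) => w; split.
  case=> [Lw | [y ys Ly]]; first by exists z; rewrite ?mem_head.
  by exists y; rewrite ?inE ?ys ?orbT.
by case=> y; rewrite inE => /predU1P [-> | ys] Ly; [left | right; exists y].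
Qed.

Lemma star_height_le_bigcup (Z : finType) (L : Z -> lang A) :
  (forall z, star_height_le h (L z)) ->
  star_height_le h (fun w => exists z, L z w).
Proof.
move=> shL; apply: star_height_le_ext (star_height_le_bigcup_seq (enum Z) shL).
by move=> w; split=> [[z] | [z Lz]]; [exists z | exists z; rewrite ?mem_enum].
Qed.

End StarHeightClosure.

Definition word_morph (A V : Type) (mul : V -> V -> V) (psi : seq A -> V) : Prop :=
  forall u v, u <> [::] -> v <> [::] -> psi (u ++ v) = mul (psi u) (psi v).

Lemma word_morph_comp (A V V' : Type) (mul : V -> V -> V) (mul' : V' -> V' -> V')
    (psi : seq A -> V) (g : V -> V') :
  word_morph mul psi -> {morph g : x y / mul x y >-> mul' x y} ->
  word_morph mul' (g \o psi).
Proof. by move=> psiM gM u v nu nv /=; rewrite psiM // gM. Qed.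

Lemma recognised_fibre (A V : Type) (mul : V -> V -> V) (psi : seq A -> V) (y : V) :
  word_morph mul psi -> recognised mul (fun w => w <> [::] /\ psi w = y).
Proof. by move=> psiM; exists psi; split=> //; exists (eq^~ y). Qed.

Section ReesMap.
Variables (I Lam U U' : Type) (f : U -> U').

Definition rees_map (x : option (I * U * Lam)) : option (I * U' * Lam) :=
  if x is Some (i, u, l) then Some (i, f u, l) else None.

Definition rees_matrix_map (P : Lam -> I -> option U) : Lam -> I -> option U' :=
  fun l i => omap f (P l i).

Lemma rees_map_mul (mulU : U -> U -> U) (mulU' : U' -> U' -> U')
    (P : Lam -> I -> option U) :
  {morph f : x y / mulU x y >-> mulU' x y} ->
  {morph rees_map : x y / rees_mul mulU P x y >->
                          rees_mul mulU' (rees_matrix_map P) x y}.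
Proof.
move=> fM [[[i u] l]|] [[[j v] m]|] //=; rewrite /rees_matrix_map.
by case: (P l j) => //= p; rewrite !fM.
Qed.

End ReesMap.

Lemma rees_map_fst_snd_inj (I Lam S T : Type) (x y : option (I * (S * T) * Lam)) :
  rees_map fst x = rees_map fst y -> rees_map snd x = rees_map snd y -> x = y.
Proof.
by case: x => [[[i [s t]] l]|]; case: y => [[[i' [s' t']] l']|] //= [-> -> ->] [->].
Qed.

Theorem theorem3p5 (S T : finType) (mulS : S -> S -> S) (mulT : T -> T -> T)
  (h : nat) :
  associative mulS -> associative mulT ->
  without_zero mulS -> without_zero mulT ->
  rees_star_height_le mulS h -> rees_star_height_le mulT h ->
  rees_star_height_le (prod_mul mulS mulT) h.
Proof.
move=> _ _ _ _ shS shT I Lam A P hI hL L [psi [psiM [X HX]]].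
pose fibre (U : Type) (f : S * T -> U) z w :=
  w <> [::] /\ rees_map f (psi w) = rees_map f z.
have fibreS z : star_height_le h (fibre _ fst z).
  apply: (shS I Lam A (rees_matrix_map fst P) hI hL).
  exact/recognised_fibre/(word_morph_comp psiM (rees_map_mul _ _)).
have fibreT z : star_height_le h (fibre _ snd z).
  apply: (shT I Lam A (rees_matrix_map snd P) hI hL).
  exact/recognised_fibre/(word_morph_comp psiM (rees_map_mul _ _)).
have shL := star_height_le_bigcup (fun z =>
  star_height_le_restrict (X z) (star_height_le_inter (fibreS z) (fibreT z))).
apply: star_height_le_ext shL => w; rewrite HX; split.
  move=> [z [Xz [[nw e1] [_ e2]]]].
  by rewrite (rees_map_fst_snd_inj e1 e2).
by move=> [nw Xw]; exists (psi w).
Qed.
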